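(* $(\Sigma^{\mathrm{mod}}_{\mathrm{ADF}}\setminus\{\emptyset\})\subseteq\Sigma^{\mathrm{prf}}_{\mathrm{ADF}}$.
   Context: Let $A$ be a finite set of statements; an interpretation is $v:A\to\{\mathbf{t},\mathbf{f},\mathbf{u}\}$. The information ordering is $\mathbf{u}<_i\mathbf{t}$, $\mathbf{u}<_i\mathbf{f}$, extended pointwise; $[v]_2$ is the set of two-valued interpretations extending $v$. An ADF is $D=(A,L,C)$ with an acceptance formula $\varphi_a$ over the parents of each statement $a$. $\Gamma_D(v)(a)$ is the greatest lower bound w.r.t. $\leq_i$ (consensus: $\mathbf{t}$ if all $\mathbf{t}$, $\mathbf{f}$ if all $\mathbf{f}$, else $\mathbf{u}$) of $\{w(\varphi_a)\mid w\in[v]_2\}$. $v$ is admissible iff $v\leq_i\Gamma_D(v)$, preferred iff $\leq_i$-maximal admissible, a two-valued model iff two-valued and $\Gamma_D(v)=v$. The signature of ADFs under semantics $\sigma$ is $\Sigma^\sigma_{\mathrm{ADF}}=\{\sigma(D)\mid D \text{ an ADF over } A\}$, where $\mathrm{mod}(D)$ and $\mathrm{prf}(D)$ are the sets of two-valued models and preferred interpretations of $D$. *)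

From mathcomp Require Import all_boot.
Set Implicit Arguments. Unset Strict Implicit. Unset Printing Implicit Defensive.

(* Truth values: Some true = t, Some false = f, None = u. *)
Definition tval := option bool.

Inductive formula (A : Type) : Type :=
| FVar of A
| FTop
| FBot
| FNeg of formula A
| FAnd of formula A & formula A
| FOr of formula A & formula A.

Fixpoint fvars (A : Type) (phi : formula A) : seq A :=
  match phi with
  | FVar a => [:: a]
  | FTop | FBot => [::]
  | FNeg p => fvars p
  | FAnd p q | FOr p q => fvars p ++ fvars q
  end.

Section ADF.
Variable A : finType.

Definition interp := {ffun A -> tval}.

Fixpoint feval (w : interp) (phi : formula A) : bool :=
  match phi with
  | FVar a => w a == Some true
  | FTop => true
  | FBot => false
  | FNeg p => ~~ feval w p
  | FAnd p q => feval w p && feval w q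
  | FOr p q => feval w p || feval w q
  end.

Definition leqi_val (x y : tval) : bool := (x == None) || (x == y).
Definition leqi (v w : interp) : bool := [forall a, leqi_val (v a) (w a)].

Definition two_valued (v : interp) : bool := [forall a, v a != None].

Definition ext2 (v : interp) : {set interp} :=
  [set w | two_valued w && leqi v w].

Record ADF := mkADF {
  links : rel A;
  acc : A -> formula A;
  acc_parents : forall a b, b \in fvars (acc a) -> links b a
}.

Definition Gamma (D : ADF) (v : interp) : interp :=
  [ffun a =>
     if [forall w in ext2 v, feval w (acc D a)] then Some true
     else if [forall w in ext2 v, ~~ feval w (acc D a)] then Some false
     else None].

Definition admissible (D : ADF) (v : interp) : bool := leqi v (Gamma D v).

Definition preferred (D : ADF) (v : interp) : bool :=
  admissible D v && [forall w, (admissible D w && leqi v w) ==> (w == v)].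

Definition two_valued_model (D : ADF) (v : interp) : bool :=
  two_valued v && (Gamma D v == v).

Definition mod_sem (D : ADF) : {set interp} := [set v | two_valued_model D v].
Definition prf_sem (D : ADF) : {set interp} := [set v | preferred D v].

Definition in_signature (sigma : ADF -> {set interp}) (S : {set interp}) : Prop :=
  exists D : ADF, sigma D = S.

End ADF.

(* Let S be a nonempty set of two-valued interpretations and chi_S the
   disjunction of the characteristic conjunctions of its members.  In the ADF
   whose acceptance formula for every a is chi_S <-> a, a two-valued w is a
   model iff w lies in S, and models are preferred since two-valued
   interpretations are maximal.  Conversely, an admissible u that decides some
   statement a is below its completion w (undecided statements set to t): were
   w outside S, w would accept a exactly when u rejects it, contradicting
   u(a) <=_i Gamma(u)(a).  An everywhere undecided u is below any member of S,
   so every admissible u lies below a member of S and preferred ones are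
   members of S. *)
From mathcomp Require Import all_boot.
Set Implicit Arguments. Unset Strict Implicit. Unset Printing Implicit Defensive.

Section Formulas.
Variable A : finType.
Implicit Types (w : interp A) (p q : formula A).

Definition FIff p q : formula A := FOr (FAnd p q) (FAnd (FNeg p) (FNeg q)).
Definition FAnds (s : seq (formula A)) : formula A := foldr (@FAnd A) (@FTop A) s.
Definition FOrs (s : seq (formula A)) : formula A := foldr (@FOr A) (@FBot A) s.

Lemma feval_FIff w p q : feval w (FIff p q) = (feval w p == feval w q).
Proof. by rewrite /=; case: (feval w p); case: (feval w q). Qed.

Lemma feval_FAnds w s : feval w (FAnds s) = all (feval w) s.
Proof. by elim: s => //= p s ->. Qed.

Lemma feval_FOrs w s : feval w (FOrs s) = has (feval w) s.
Proof. by elim: s => //= p s ->. Qed.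

End Formulas.

Section Interpretations.
Variable A : finType.
Implicit Types (u v w : interp A).

Lemma two_valuedP v : two_valued v -> forall x, v x = Some (v x == Some true).
Proof. by move=> /forallP tv x; move: (tv x); case: (v x) => [[]|]. Qed.

Lemma leqi_val_Some b y : leqi_val (Some b) y -> y = Some b.
Proof. by move=> /orP [//|/eqP]. Qed.

Lemma leqi_two_valued v w : two_valued v -> leqi v w -> w = v.
Proof.
move=> tv /forallP vw; apply/ffunP => x; move: (vw x).
by rewrite (two_valuedP tv) => /leqi_val_Some.
Qed.

Lemma leqi_refl v : leqi v v.
Proof. by apply/forallP => x; rewrite /leqi_val eqxx orbT. Qed.

Lemma ext2_two_valued v : two_valued v -> ext2 v = [set v].
Proof.
move=> tv; apply/setP => w; rewrite !inE.
apply/andP/eqP => [[_ /(leqi_two_valued tv)] //|->].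
by rewrite leqi_refl.
Qed.

Definition completion u : interp A :=
  [ffun x => if u x is Some b then Some b else Some true].

Lemma completion_ext2 u : completion u \in ext2 u.
Proof.
rewrite inE; apply/andP; split; apply/forallP => x; rewrite ffunE.
  by case: (u x).
by case: (u x) => //= b; rewrite /leqi_val eqxx orbT.
Qed.

Lemma completion_Some u x b : u x = Some b -> completion u x = Some b.
Proof. by rewrite ffunE => ->. Qed.

End Interpretations.

Section Operator.
Variables (A : finType) (D : ADF A).
Implicit Types (u v w : interp A).

Lemma Gamma_ext2 u w a b :
  w \in ext2 u -> Gamma D u a = Some b -> feval w (acc D a) = b.
Proof.
move=> wu; rewrite ffunE.
case: ifP => [/forallP /(_ w) | _]; first by rewrite wu => /= ? [<-].
case: ifP => [/forallP /(_ w) | //]; rewrite wu => /= /negbTE -> [<-] //.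
Qed.

Lemma Gamma_two_valued v a :
  two_valued v -> Gamma D v a = Some (feval v (acc D a)).
Proof.
move=> tv; have forall_in_set1 : forall P : pred (interp A), [forall w in [set v], P w] = P v.
  move=> P; apply/forallP/idP => [/(_ v)|Pv w]; first by rewrite inE eqxx.
  by rewrite inE; apply/implyP => /eqP ->.
by rewrite ffunE ext2_two_valued // !forall_in_set1; case: (feval v _).
Qed.

Lemma admissible_two_valued v :
  two_valued v -> admissible D v = two_valued_model D v.
Proof.
move=> tv; rewrite /two_valued_model tv.
apply/idP/eqP => [vG|Gv]; last by rewrite /admissible Gv leqi_refl.
apply/ffunP => a; move/forallP: vG => /(_ a).
by rewrite {1}(two_valuedP tv a) => /leqi_val_Some ->; rewrite -two_valuedP.
Qed.

Lemma two_valued_model_preferred v : two_valued_model D v -> preferred D v.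
Proof.
move=> /[dup] /andP [tv _] vmod.
rewrite /preferred admissible_two_valued // vmod.
by apply/forallP => w; apply/implyP => /andP [_ /(leqi_two_valued tv) ->].
Qed.

End Operator.

Section ModelSetADF.
Variables (A : finType) (S : {set interp A}).
Hypothesis S_two_valued : forall v, v \in S -> two_valued v.
Implicit Types (u v w : interp A).

Definition literal v x : formula A :=
  if v x == Some true then FVar x else FNeg (FVar x).

Definition char_formula v : formula A := FAnds (map (literal v) (enum A)).

Definition char_set_formula : formula A := FOrs (map char_formula (enum S)).

Definition model_set_acc (a : A) : formula A := FIff char_set_formula (FVar a).

Definition model_set_adf : ADF A :=
  @mkADF A (fun _ _ => true) model_set_acc (fun _ _ _ => isT).

Lemma feval_char_formula w v :
  two_valued w -> two_valued v -> feval w (char_formula v) = (w == v).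
Proof.
move=> tw tv; rewrite feval_FAnds all_map.
apply/allP/eqP => [wv|-> x _]; last by rewrite /= /literal; case: ifP => /= ->.
apply/ffunP => x; move: (wv x (mem_enum A x)); rewrite /= /literal.
move: (two_valuedP tw x) (two_valuedP tv x).
by case ew: (w x) => [[]|]; case: (v x) => [[]|] //= _ _; rewrite ew.
Qed.

Lemma feval_char_set_formula w :
  two_valued w -> feval w char_set_formula = (w \in S).
Proof.
move=> tw; rewrite feval_FOrs has_map; apply/hasP/idP => [[v] | wS].
  rewrite mem_enum => vS /=.
  by rewrite feval_char_formula ?(S_two_valued vS) // => /eqP ->.
by exists w; rewrite ?mem_enum //= feval_char_formula ?(S_two_valued wS).
Qed.

Lemma feval_model_set_acc w a :
  two_valued w -> feval w (model_set_acc a) = ((w \in S) == (w a == Some true)).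
Proof. by move=> tw; rewrite feval_FIff feval_char_set_formula. Qed.

Lemma model_set_adf_preferred v : v \in S -> preferred model_set_adf v.
Proof.
move=> vS; have tv := S_two_valued vS.
apply: two_valued_model_preferred; rewrite /two_valued_model tv.
apply/eqP/ffunP => a; rewrite Gamma_two_valued // feval_model_set_acc // vS.
by rewrite -(two_valuedP tv).
Qed.

Lemma admissible_below_model_set u :
  S != set0 -> admissible model_set_adf u -> exists2 w, w \in S & leqi u w.
Proof.
move=> /set0Pn [v0 v0S] uadm.
have [a ua | undecided] := pickP (fun a => u a != None); last first.
  exists v0 => //; apply/forallP => x.
  by move/negbFE: (undecided x); rewrite /leqi_val => ->.
move: ua; case ub: (u a) => [b|] // _.
have u_c := completion_ext2 u; move: (u_c); rewrite inE => /andP [tc uc].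
exists (completion u) => //.
move/forallP: uadm => /(_ a); rewrite ub => /leqi_val_Some /(Gamma_ext2 u_c).
by rewrite feval_model_set_acc // (completion_Some ub); case: (_ \in S); case: b {ub}.
Qed.

Lemma preferred_model_set_adf u :
  S != set0 -> preferred model_set_adf u -> u \in S.
Proof.
move=> S0 /andP [uadm /forallP umax].
have [w wS uw] := admissible_below_model_set S0 uadm.
have /andP [wadm _] := model_set_adf_preferred wS.
by move: (umax w); rewrite wadm uw => /eqP <-.
Qed.

End ModelSetADF.

Theorem proposition7 (A : finType) (S : {set interp A}) :
  in_signature (@mod_sem A) S -> S != set0 -> in_signature (@prf_sem A) S.
Proof.
case=> D <- S0.
have two_valued_mod : forall v, v \in mod_sem D -> two_valued v.
  by move=> v; rewrite inE => /andP [].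
exists (model_set_adf (mod_sem D)); apply/setP => u; rewrite inE.
apply/idP/idP; first exact: preferred_model_set_adf.
exact: model_set_adf_preferred.
Qed.
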